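(* Let $(S,M)$ be a surface with marked points and empty boundary, and let $T$ be an ideal triangulation of $(S,M)$ such that at each puncture $p\in M$ there are at least three arcs of $T$ incident to $p$ (an arc starting and ending at the same puncture counted twice). Let $Q$ be the adjacency quiver of $T$, with vertex set $Q_0$ and arrow set $Q_1$. Then: (a) $Q$ is connected and has no loops or $2$-cycles; (b) for every $i\in Q_0$ there are exactly two arrows starting at $i$ and exactly two arrows ending at $i$; (c) there are bijections $f,g:Q_1\to Q_1$ such that for every $\alpha\in Q_1$ the set $\{f(\alpha),g(\alpha)\}$ consists of the two arrows that start at the vertex at which $\alpha$ ends, and $f^3$ is the identity on $Q_1$.
   Context: A surface with marked points and empty boundary is a pair $(S,M)$ with $S$ a compact, connected, oriented surface without boundary and $M\subset S$ a finite non-empty set of punctures. The adjacency quiver $Q$ of $T$ has the arcs of $T$ as vertices, and for each puncture $p$ and each pair of arcs $i,j$ incident to $p$ such that $j$ immediately follows $i$ in the counterclockwise order around $p$, an arrow $i\to j$ (one arrow per such occurrence). *)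

From mathcomp Require Import all_boot all_fingroup.
Set Implicit Arguments. Unset Strict Implicit. Unset Printing Implicit Defensive.

(* Combinatorial model of an ideal triangulation T of a surface with marked
   points and empty boundary (S,M), as an oriented combinatorial map:
   - D      : the finite set of darts (half-arcs: an arc together with one of
              its two ends); an arc with both ends at the same puncture gives
              two darts at that puncture.
   - a      : the involution exchanging the two ends of an arc (no fixed points).
   - s      : the rotation sending a dart at a puncture p to the next dart at p
              in the counterclockwise order around p (the orientation of S).
   Punctures = cycles of s, arcs = orbits of a, triangles = cycles of s \o a. *)

Section Tri.
Variable D : finType.

Definition ideal_triangulation_map (s a : {perm D}) : Prop :=
  [/\ (exists d : D, True),
      (forall d, a (a d) = d /\ a d != d),
      (forall d, s (a (s (a (s (a d))))) = d /\ s (a d) != d) &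
      (forall d e, connect (fun x y => (y == s x) || (y == a x)) d e)].

Definition at_least_three_arcs_at_each_puncture (s : {perm D}) : Prop :=
  forall d, s d != d /\ s (s d) != d.

Definition arc (a : {perm D}) (d : D) : {set D} := [set d; a d].

(* Adjacency quiver: vertices Q0 = arcs of T;
   arrows Q1 = D : the dart d at puncture p gives the arrow
   arc d -> arc (s d), from an arc to the arc immediately following it
   counterclockwise around p (one arrow per occurrence). *)
Definition adjQ0 (a : {perm D}) : {set {set D}} := [set arc a d | d : D].
Definition adjQ1 : finType := D.
Definition adj_src (a : {perm D}) (x : adjQ1) : {set D} := arc a x.
Definition adj_tgt (s a : {perm D}) (x : adjQ1) : {set D} := arc a (s x).

Definition adj_undirected (s a : {perm D}) : rel {set D} :=
  fun i j => [exists x : adjQ1,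
    ((adj_src a x == i) && (adj_tgt s a x == j)) ||
    ((adj_src a x == j) && (adj_tgt s a x == i))].

Definition quiver_connected (s a : {perm D}) : Prop :=
  forall i j, i \in adjQ0 a -> j \in adjQ0 a -> connect (adj_undirected s a) i j.

Definition quiver_no_loops (s a : {perm D}) : Prop :=
  forall x : adjQ1, adj_src a x != adj_tgt s a x.

Definition quiver_no_2cycles (s a : {perm D}) : Prop :=
  forall x y : adjQ1,
    ~ (adj_src a x = adj_tgt s a y /\ adj_tgt s a x = adj_src a y).

End Tri.

From Pilot Require Import Defs.
From mathcomp Require Import all_boot all_fingroup.

Set Implicit Arguments. Unset Strict Implicit. Unset Printing Implicit Defensive.

(* Arcs are the pairs {d, a d},
   so every fibre of the source map is an arc, and every fibre of the target
   map is its preimage under s; both have two elements. The relation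
   s a s a s a = 1 (triangular faces) excludes loops and 2-cycles once every
   puncture has valency at least 3, and f := a \o s is a permutation of order 3
   with {f x, s x} the two arrows leaving the target arc {s x, a (s x)} of x. *)

Lemma eq_arc (D : finType) (a : {perm D}) (d e : D) :
  (forall x, a (a x) = x) ->
  (Defs.arc a d == Defs.arc a e) = (d == e) || (d == a e).
Proof.
move=> aK; apply/idP/idP.
- move=> /eqP arc_de; have : d \in Defs.arc a d by rewrite !inE eqxx.
  by rewrite arc_de !inE.
- by case/orP=> /eqP ->; rewrite /Defs.arc ?aK // setUC.
Qed.

Lemma perm_eqVinv (D : finType) (s : {perm D}) x d :
  (s x == d) = (x == (s^-1)%g d).
Proof. by apply/eqP/eqP => [<-|->]; rewrite ?permK ?permKV. Qed.

Section AdjacencyQuiver.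
Variables (D : finType) (s a : {perm D}).
Hypothesis aK : forall d, a (a d) = d.
Hypothesis a_fixfree : forall d, a d != d.
Hypothesis face3 : forall d, s (a (s (a (s (a d))))) = d.
Hypothesis sa_fixfree : forall d, s (a d) != d.

Let eq_arcE d e := eq_arc d e aK.

Lemma arcK d : Defs.arc a (a d) = Defs.arc a d.
Proof. by apply/eqP; rewrite eq_arcE eqxx orbT. Qed.

Lemma quiver_connected_map :
  (forall d e, connect (fun x y => (y == s x) || (y == a x)) d e) ->
  quiver_connected s a.
Proof.
move=> map_conn i j /imsetP[d _ ->] /imsetP[e _ ->].
have /connectP[p p_path ->] := map_conn d e.
elim: p d p_path => [|y p IHp] d //= /andP[step /IHp]; apply: connect_trans.
case/orP: step => /eqP ->; last by rewrite arcK.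
by apply: connect1; apply/existsP; exists d; rewrite /adj_src /adj_tgt !eqxx.
Qed.

Lemma s_neq_a d : s d != a d.
Proof. by apply/eqP => sd_ad; move: (sa_fixfree (a d)); rewrite aK sd_ad eqxx. Qed.

Lemma adjQ_no_loops : (forall d, s d != d) -> quiver_no_loops s a.
Proof.
move=> s_fixfree x; rewrite /adj_src /adj_tgt eq_arcE negb_or eq_sym s_fixfree /=.
by apply/eqP => x_asx; move: (s_neq_a x); rewrite {2}x_asx aK eqxx.
Qed.

(* If s (s d) = a d then the face of a (s d) collapses to s fixing a (s d). *)
Lemma s2_neq_a : (forall d, s d != d) -> forall d, s (s d) != a d.
Proof.
move=> s_fixfree d; apply/eqP => ssd.
have := face3 (a (s d)); rewrite aK ssd aK => sasd.
by move: (s_fixfree (a (s d))); rewrite sasd eqxx.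
Qed.

Lemma adjQ_no_2cycles :
  at_least_three_arcs_at_each_puncture s -> quiver_no_2cycles s a.
Proof.
move=> val3 x y [] /eqP; rewrite eq_arcE => src_x_tgt_y /eqP; rewrite eq_arcE => tgt_x_src_y.
have s_fixfree d : s d != d by case: (val3 d).
case/orP: src_x_tgt_y => /eqP ex; case/orP: tgt_x_src_y => /eqP ey.
- by case: (val3 y) => _; rewrite -ex ey eqxx.
- by move: (s2_neq_a s_fixfree y); rewrite -ex ey eqxx.
- by move: (s2_neq_a s_fixfree x); rewrite ey ex aK eqxx.
- have sasy : s (a (s y)) = a y by rewrite -ex.
  have := face3 (s y); rewrite sasy aK sasy => face_sy.
  by move: (sa_fixfree (s y)); rewrite -{2}face_sy sasy eqxx.
Qed.

Lemma adj_src_fibre d : [set x : adjQ1 D | adj_src a x == Defs.arc a d] = [set d; a d].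
Proof. by apply/setP => x; rewrite !inE /adj_src eq_arcE. Qed.

Lemma adj_tgt_fibre d :
  [set x : adjQ1 D | adj_tgt s a x == Defs.arc a d] = [set (s^-1)%g d; (s^-1)%g (a d)].
Proof. by apply/setP => x; rewrite !inE /adj_tgt eq_arcE !perm_eqVinv. Qed.

Lemma card_adj_src_fibre d : #|[set x : adjQ1 D | adj_src a x == Defs.arc a d]| = 2.
Proof. by rewrite adj_src_fibre cards2 eq_sym a_fixfree. Qed.

Lemma card_adj_tgt_fibre d : #|[set x : adjQ1 D | adj_tgt s a x == Defs.arc a d]| = 2.
Proof. by rewrite adj_tgt_fibre cards2 (inj_eq perm_inj) eq_sym a_fixfree. Qed.

Lemma out_arrows_of_tgt x :
  [set ((s * a)%g x); s x] = [set y : adjQ1 D | adj_src a y == adj_tgt s a x].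
Proof. by rewrite /adj_tgt adj_src_fibre permM setUC. Qed.

Lemma face_perm_order3 x : ((s * a)%g ((s * a)%g ((s * a)%g x))) = x.
Proof. by have := face3 (a x); rewrite aK !permM => ->; rewrite aK. Qed.

End AdjacencyQuiver.

Theorem proposition2p2 (D : finType) (s a : {perm D}) :
  ideal_triangulation_map s a ->
  at_least_three_arcs_at_each_puncture s ->
  (* (a) *)
  [/\ quiver_connected s a, quiver_no_loops s a & quiver_no_2cycles s a] /\
  (* (b) *)
  (forall i, i \in adjQ0 a ->
     #|[set x : adjQ1 D | adj_src a x == i]| = 2 /\
     #|[set x : adjQ1 D | adj_tgt s a x == i]| = 2) /\
  (* (c) *)
  (exists f g : {perm adjQ1 D},
     (forall x : adjQ1 D,
        f x != g x /\
        [set f x; g x] = [set y : adjQ1 D | adj_src a y == adj_tgt s a x]) /\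
     (forall x : adjQ1 D, f (f (f x)) = x)).
Proof.
case=> _ a_inv faces map_conn val3.
have aK d : a (a d) = d by case: (a_inv d).
have a_fixfree d : a d != d by case: (a_inv d).
have face3 d : s (a (s (a (s (a d))))) = d by case: (faces d).
have sa_fixfree d : s (a d) != d by case: (faces d).
have s_fixfree d : s d != d by case: (val3 d).
split; [split|split].
- exact: quiver_connected_map.
- exact: adjQ_no_loops.
- exact: adjQ_no_2cycles.
- by move=> _ /imsetP[d _ ->]; rewrite card_adj_src_fibre ?card_adj_tgt_fibre.
- exists (s * a)%g, s; split=> x; last exact: face_perm_order3.
  split; last exact: out_arrows_of_tgt.
  by rewrite permM a_fixfree.
Qed.
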